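(* Let $(\mathcal C,\otimes,\mathbf 1)$ be a monoidal r-category, let $X\in\mathcal C$, and let $\mathrm{coev}_X:\mathbf 1\to X\otimes X^*$ be the canonical coevaluation morphism. Let $\mathrm{ev}_X:X^*\otimes X\to\mathbf 1$ be an arbitrary morphism. Then (suppressing associativity and unit constraints) the identity $$(\mathrm{id}_X\otimes \mathrm{ev}_X)\circ(\mathrm{coev}_X\otimes \mathrm{id}_X)=\mathrm{id}_X$$ holds if and only if the identity $$(\mathrm{ev}_X\otimes \mathrm{id}_{X^*})\circ(\mathrm{id}_{X^*}\otimes \mathrm{coev}_X)=\mathrm{id}_{X^*}$$ holds.
   Context: A monoidal category $(\mathcal C,\otimes,\mathbf 1)$ is called a monoidal r-category if (i) for every object $X$ the functor $Y\mapsto \mathrm{Hom}(\mathbf 1,X\otimes Y)$ is representable by an object $X^*$, i.e. there are isomorphisms $\mathrm{Hom}(\mathbf 1,X\otimes Y)\cong\mathrm{Hom}(X^*,Y)$ natural in $Y$; and (ii) the resulting functor $X\mapsto X^*$, $\mathcal C\to\mathcal C^{\mathrm{op}}$, is an equivalence of categories (its inverse is denoted $X\mapsto {}^*X$). The canonical coevaluation $\mathrm{coev}_X:\mathbf 1\to X\otimes X^*$ is the morphism corresponding to $\mathrm{id}_{X^*}$ under $\mathrm{Hom}(\mathbf 1,X\otimes X^* )\cong \mathrm{Hom}(X^*,X^* )$. *)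

Record MonCat : Type := {
  ob : Type;
  hom : ob -> ob -> Type;
  idm : forall a, hom a a;
  comp : forall a b c, hom b c -> hom a b -> hom a c;
  comp_assoc : forall a b c d (f : hom c d) (g : hom b c) (h : hom a b),
      comp _ _ _ (comp _ _ _ f g) h = comp _ _ _ f (comp _ _ _ g h);
  comp_id_l : forall a b (f : hom a b), comp _ _ _ (idm b) f = f;
  comp_id_r : forall a b (f : hom a b), comp _ _ _ f (idm a) = f;
  tens : ob -> ob -> ob;
  tensm : forall a b c d, hom a b -> hom c d -> hom (tens a c) (tens b d);
  tens_id : forall a b, tensm _ _ _ _ (idm a) (idm b) = idm (tens a b);
  tens_comp : forall a1 b1 c1 a2 b2 c2
      (f1 : hom b1 c1) (g1 : hom a1 b1) (f2 : hom b2 c2) (g2 : hom a2 b2),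
      tensm _ _ _ _ (comp _ _ _ f1 g1) (comp _ _ _ f2 g2)
      = comp _ _ _ (tensm _ _ _ _ f1 f2) (tensm _ _ _ _ g1 g2);
  unit : ob;
  asc : forall a b c, hom (tens (tens a b) c) (tens a (tens b c));
  asc_inv : forall a b c, hom (tens a (tens b c)) (tens (tens a b) c);
  asc_inv_asc : forall a b c,
      comp _ _ _ (asc_inv a b c) (asc a b c) = idm _;
  asc_asc_inv : forall a b c,
      comp _ _ _ (asc a b c) (asc_inv a b c) = idm _;
  asc_nat : forall a a' b b' c c' (f : hom a a') (g : hom b b') (h : hom c c'),
      comp _ _ _ (asc a' b' c') (tensm _ _ _ _ (tensm _ _ _ _ f g) h)
      = comp _ _ _ (tensm _ _ _ _ f (tensm _ _ _ _ g h)) (asc a b c);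
  lu : forall a, hom (tens unit a) a;
  lu_inv : forall a, hom a (tens unit a);
  lu_inv_lu : forall a, comp _ _ _ (lu_inv a) (lu a) = idm _;
  lu_lu_inv : forall a, comp _ _ _ (lu a) (lu_inv a) = idm _;
  lu_nat : forall a b (f : hom a b),
      comp _ _ _ (lu b) (tensm _ _ _ _ (idm unit) f) = comp _ _ _ f (lu a);
  ru : forall a, hom (tens a unit) a;
  ru_inv : forall a, hom a (tens a unit);
  ru_inv_ru : forall a, comp _ _ _ (ru_inv a) (ru a) = idm _;
  ru_ru_inv : forall a, comp _ _ _ (ru a) (ru_inv a) = idm _;
  ru_nat : forall a b (f : hom a b),
      comp _ _ _ (ru b) (tensm _ _ _ _ f (idm unit)) = comp _ _ _ f (ru a);
  pentagon : forall a b c d,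
      comp _ _ _ (asc a b (tens c d)) (asc (tens a b) c d)
      = comp _ _ _ (tensm _ _ _ _ (idm a) (asc b c d))
          (comp _ _ _ (asc a (tens b c) d) (tensm _ _ _ _ (asc a b c) (idm d)));
  triangle : forall a b,
      comp _ _ _ (tensm _ _ _ _ (idm a) (lu b)) (asc a unit b)
      = tensm _ _ _ _ (ru a) (idm b)
}.

Arguments idm {C} a : rename.
Arguments comp {C a b c} f g : rename.
Arguments tens {C} a b : rename.
Arguments tensm {C a b c d} f g : rename.
Arguments unit {C} : rename.
Arguments asc {C} a b c : rename.
Arguments asc_inv {C} a b c : rename.
Arguments lu {C} a : rename.
Arguments lu_inv {C} a : rename.
Arguments ru {C} a : rename.
Arguments ru_inv {C} a : rename.

(* Right representability data: for every X an object X^* and bijections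
   Hom(1, X (x) Y) ~ Hom(X^*, Y), natural in Y. *)
Record RStructure (C : MonCat) : Type := {
  dual : ob C -> ob C;
  rphi : forall (X Y : ob C), hom C unit (tens X Y) -> hom C (dual X) Y;
  rpsi : forall (X Y : ob C), hom C (dual X) Y -> hom C unit (tens X Y);
  rphi_rpsi : forall X Y (f : hom C (dual X) Y), rphi X Y (rpsi X Y f) = f;
  rpsi_rphi : forall X Y (h : hom C unit (tens X Y)), rpsi X Y (rphi X Y h) = h;
  rphi_nat : forall X Y Y' (g : hom C Y Y') (h : hom C unit (tens X Y)),
      rphi X Y' (comp (tensm (idm X) g) h) = comp g (rphi X Y h)
}.

Arguments dual {C} R X : rename.
Arguments rphi {C} R X Y h : rename.
Arguments rpsi {C} R X Y f : rename.

Definition coev {C : MonCat} (R : RStructure C) (X : ob C)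
  : hom C unit (tens X (dual R X)) :=
  rpsi R X (dual R X) (idm (dual R X)).

(* action of X |-> X^* on morphisms, induced by representability (Yoneda) *)
Definition dual_hom {C : MonCat} (R : RStructure C) {X X' : ob C}
  (f : hom C X X') : hom C (dual R X') (dual R X) :=
  rphi R X' (dual R X) (comp (tensm f (idm (dual R X))) (coev R X)).

Definition is_iso {C : MonCat} {a b : ob C} (f : hom C a b) : Prop :=
  exists g : hom C b a, comp g f = idm a /\ comp f g = idm b.

Definition dual_equivalence {C : MonCat} (R : RStructure C) : Prop :=
  (forall X X' : ob C,
     exists g : hom C (dual R X') (dual R X) -> hom C X X',
       (forall f, g (dual_hom R f) = f) /\ (forall h, dual_hom R (g h) = h))
  /\ (forall Y : ob C, exists X : ob C, exists f : hom C (dual R X) Y, is_iso f).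

Definition r_category {C : MonCat} (R : RStructure C) : Prop :=
  dual_equivalence R.

Definition zig {C : MonCat} (R : RStructure C) (X : ob C)
  (ev : hom C (tens (dual R X) X) unit) : Prop :=
  comp (ru X)
    (comp (tensm (idm X) ev)
       (comp (asc X (dual R X) X)
          (comp (tensm (coev R X) (idm X)) (lu_inv X))))
  = idm X.

Definition zag {C : MonCat} (R : RStructure C) (X : ob C)
  (ev : hom C (tens (dual R X) X) unit) : Prop :=
  comp (lu (dual R X))
    (comp (tensm ev (idm (dual R X)))
       (comp (asc_inv (dual R X) X (dual R X))
          (comp (tensm (idm (dual R X)) (coev R X)) (ru_inv (dual R X)))))
  = idm (dual R X).

From Corelib Require Import ssreflect.

(* Both zig-zag composites are linked by one identity: capping [coev ⊗ coev]
   with [ev] in the middle, coherence lets us slide the cap either onto the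
   first or onto the second copy of [coev], which yields
   [(zig ⊗ id) ∘ coev = (id ⊗ zag) ∘ coev].  If [zig = id], the left side is
   [coev], so [zag] and [id] have the same image [(id ⊗ -) ∘ coev] under the
   representing bijection, hence [zag = id].  If [zag = id], the right side is
   [coev], so the dual morphisms of [zig] and [id] agree, hence [zig = id]
   because [X ↦ X^*] is faithful. *)

Section MonoidalCalculus.
Context {C : MonCat}.

Local Notation "f ∘ g" := (comp f g) (at level 40, left associativity).
Local Notation "f ⊗ g" := (tensm f g) (at level 30).

Lemma compA {a b c d : ob C} (f : hom C c d) (g : hom C b c) (h : hom C a b) :
  f ∘ g ∘ h = f ∘ (g ∘ h).
Proof. exact: comp_assoc. Qed.

Lemma comp1f {a b : ob C} (f : hom C a b) : idm b ∘ f = f.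
Proof. exact: comp_id_l. Qed.

Lemma compf1 {a b : ob C} (f : hom C a b) : f ∘ idm a = f.
Proof. exact: comp_id_r. Qed.

Lemma tensm11 (a b : ob C) : idm a ⊗ idm b = idm (tens a b).
Proof. exact: tens_id. Qed.

Lemma tensm_comp {a1 b1 c1 a2 b2 c2 : ob C} (f1 : hom C b1 c1) (g1 : hom C a1 b1)
    (f2 : hom C b2 c2) (g2 : hom C a2 b2) :
  (f1 ∘ g1) ⊗ (f2 ∘ g2) = (f1 ⊗ f2) ∘ (g1 ⊗ g2).
Proof. exact: tens_comp. Qed.

Lemma tensm_compl {a b c d : ob C} (f : hom C b c) (g : hom C a b) :
  (f ∘ g) ⊗ idm d = (f ⊗ idm d) ∘ (g ⊗ idm d).
Proof. by rewrite -tensm_comp comp1f. Qed.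

Lemma tensm_compr {a b c d : ob C} (f : hom C b c) (g : hom C a b) :
  idm d ⊗ (f ∘ g) = (idm d ⊗ f) ∘ (idm d ⊗ g).
Proof. by rewrite -tensm_comp comp1f. Qed.

Lemma naturality_inv {x y x' y' : ob C} (i : hom C x y) (j : hom C y x)
    (i' : hom C x' y') (j' : hom C y' x') (p : hom C x x') (q : hom C y y') :
  i ∘ j = idm y -> j' ∘ i' = idm x' -> i' ∘ p = q ∘ i -> j' ∘ q = p ∘ j.
Proof.
move=> ij_id ji'_id nat_pq.
rewrite -[LHS]compf1 -ij_id -compA (compA j' q i) -nat_pq.
by rewrite -(compA j' i' p) ji'_id comp1f.
Qed.

Lemma split_mono_cancel {x y z : ob C} (i : hom C y z) (j : hom C z y)
    (f g : hom C x y) :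
  j ∘ i = idm y -> i ∘ f = i ∘ g -> f = g.
Proof.
move=> ji_id eq_if.
by rewrite -(comp1f f) -ji_id compA eq_if -compA ji_id comp1f.
Qed.

Lemma split_epi_cancel {x y z : ob C} (i : hom C x y) (j : hom C y x)
    (f g : hom C y z) :
  i ∘ j = idm y -> f ∘ i = g ∘ i -> f = g.
Proof.
move=> ij_id eq_fi.
by rewrite -(compf1 f) -ij_id -compA eq_fi compA ij_id compf1.
Qed.

Lemma asc_inv_nat {a a' b b' c c' : ob C}
    (f : hom C a a') (g : hom C b b') (h : hom C c c') :
  asc_inv a' b' c' ∘ (f ⊗ (g ⊗ h)) = ((f ⊗ g) ⊗ h) ∘ asc_inv a b c.
Proof.
exact: naturality_inv (asc_asc_inv C _ _ _) (asc_inv_asc C _ _ _)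
  (asc_nat C _ _ _ _ _ _ _ _ _).
Qed.

Lemma lu_inv_nat {a b : ob C} (f : hom C a b) :
  lu_inv b ∘ f = (idm unit ⊗ f) ∘ lu_inv a.
Proof. exact: naturality_inv (lu_lu_inv C _) (lu_inv_lu C _) (lu_nat C _ _ _). Qed.

Lemma ru_inv_nat {a b : ob C} (f : hom C a b) :
  ru_inv b ∘ f = (f ⊗ idm unit) ∘ ru_inv a.
Proof. exact: naturality_inv (ru_ru_inv C _) (ru_inv_ru C _) (ru_nat C _ _ _). Qed.

Lemma tensm_unitl_inj {a b : ob C} (f g : hom C a b) :
  idm unit ⊗ f = idm unit ⊗ g -> f = g.
Proof.
move=> eq_fg; apply: (split_epi_cancel (lu a) (lu_inv a)); first exact: lu_lu_inv.
by rewrite -!lu_nat eq_fg.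
Qed.

Lemma tensm_unitr_inj {a b : ob C} (f g : hom C a b) :
  f ⊗ idm unit = g ⊗ idm unit -> f = g.
Proof.
move=> eq_fg; apply: (split_epi_cancel (ru a) (ru_inv a)); first exact: ru_ru_inv.
by rewrite -!ru_nat eq_fg.
Qed.

(* Kelly's coherence lemmas, derived from the pentagon and triangle axioms. *)
Lemma lu_tens_asc (a b : ob C) : lu (tens a b) ∘ asc unit a b = lu a ⊗ idm b.
Proof.
apply: tensm_unitl_inj.
apply: (split_epi_cancel (asc unit (tens unit a) b ∘ (asc unit unit a ⊗ idm b))
          ((asc_inv unit unit a ⊗ idm b) ∘ asc_inv unit (tens unit a) b)).
  rewrite compA -(compA (asc unit unit a ⊗ idm b)) -tensm_compl.
  by rewrite asc_asc_inv tensm11 comp1f asc_asc_inv.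
rewrite tensm_compr compA -pentagon -compA triangle -(tensm11 a b).
by rewrite -asc_nat -triangle tensm_compl -compA asc_nat compA.
Qed.

Lemma ru_tens_asc (a b : ob C) : (idm a ⊗ ru b) ∘ asc a b unit = ru (tens a b).
Proof.
apply: tensm_unitr_inj.
apply: (split_mono_cancel (asc a b unit) (asc_inv a b unit)); first exact: asc_inv_asc.
rewrite -triangle -(tensm11 a b) -compA asc_nat compA pentagon -compA -tensm_compr.
by rewrite triangle -compA -asc_nat compA -tensm_compl.
Qed.

Lemma lu_unit_tens (a : ob C) : lu (tens unit a) = idm unit ⊗ lu a.
Proof.
apply: (split_mono_cancel (lu a) (lu_inv a)); first exact: lu_inv_lu.
by rewrite lu_nat.
Qed.

Lemma lu_inv_unit : lu_inv (@unit C) = ru_inv unit.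
Proof.
have lu_ru_unit : lu (@unit C) = ru unit.
  by apply: tensm_unitr_inj; rewrite -lu_tens_asc -triangle lu_unit_tens.
rewrite -[LHS]compf1 -(ru_ru_inv C unit) -compA -lu_ru_unit.
by rewrite lu_inv_lu comp1f.
Qed.

Lemma lu_inv_tens (a b : ob C) :
  lu_inv a ⊗ idm b = asc_inv unit a b ∘ lu_inv (tens a b).
Proof.
apply: (split_mono_cancel (lu a ⊗ idm b) (lu_inv a ⊗ idm b)).
  by rewrite -tensm_compl lu_inv_lu tensm11.
rewrite -tensm_compl lu_lu_inv tensm11 -lu_tens_asc compA.
by rewrite -(compA (asc unit a b)) asc_asc_inv comp1f lu_lu_inv.
Qed.

Lemma ru_inv_tens (a b : ob C) :
  idm a ⊗ ru_inv b = asc a b unit ∘ ru_inv (tens a b).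
Proof.
apply: (split_mono_cancel (idm a ⊗ ru b) (idm a ⊗ ru_inv b)).
  by rewrite -tensm_compr ru_inv_ru tensm11.
by rewrite -tensm_compr ru_ru_inv tensm11 -compA ru_tens_asc ru_ru_inv.
Qed.

Definition zig_map {X D : ob C} (c : hom C unit (tens X D))
    (e : hom C (tens D X) unit) : hom C X X :=
  ru X ∘ ((idm X ⊗ e) ∘ (asc X D X ∘ ((c ⊗ idm X) ∘ lu_inv X))).

Definition zag_map {X D : ob C} (c : hom C unit (tens X D))
    (e : hom C (tens D X) unit) : hom C D D :=
  lu D ∘ ((e ⊗ idm D) ∘ (asc_inv D X D ∘ ((idm D ⊗ c) ∘ ru_inv D))).

Lemma cap_middle_asc {X D : ob C} (e : hom C (tens D X) unit) :
  (idm X ⊗ lu D) ∘ (idm X ⊗ (e ⊗ idm D)) ∘ (idm X ⊗ asc_inv D X D) ∘ asc X D (tens X D)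
  = (ru X ⊗ idm D) ∘ ((idm X ⊗ e) ⊗ idm D) ∘ (asc X D X ⊗ idm D) ∘ asc_inv (tens X D) X D.
Proof.
apply: (split_epi_cancel (asc (tens X D) X D) (asc_inv (tens X D) X D)).
  exact: asc_asc_inv.
rewrite !compA asc_inv_asc compf1 pentagon -(compA (idm X ⊗ asc_inv D X D)).
rewrite -tensm_compr asc_inv_asc tensm11 comp1f -(compA (idm X ⊗ (e ⊗ idm D))).
by rewrite -asc_nat compA -(compA (idm X ⊗ lu D)) triangle.
Qed.

Lemma zig_map_zag_map {X D : ob C} (c : hom C unit (tens X D))
    (e : hom C (tens D X) unit) :
  (zig_map c e ⊗ idm D) ∘ c = (idm X ⊗ zag_map c e) ∘ c.
Proof.
have coev2_left :
    ((c ⊗ idm X) ⊗ idm D) ∘ (asc_inv unit X D ∘ ((idm unit ⊗ c) ∘ lu_inv unit))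
    = asc_inv (tens X D) X D ∘ ((c ⊗ c) ∘ lu_inv unit).
  rewrite -compA -asc_inv_nat compA tensm11 -(compA (c ⊗ idm _)).
  by rewrite -tensm_comp comp1f compf1.
have coev2_right :
    (idm X ⊗ (idm D ⊗ c)) ∘ (asc X D unit ∘ ((c ⊗ idm unit) ∘ ru_inv unit))
    = asc X D (tens X D) ∘ ((c ⊗ c) ∘ ru_inv unit).
  rewrite -compA -asc_nat compA tensm11 -(compA (idm _ ⊗ c)).
  by rewrite -tensm_comp comp1f compf1.
rewrite /zig_map /zag_map !tensm_compl !tensm_compr !compA lu_inv_tens ru_inv_tens.
rewrite !compA lu_inv_nat ru_inv_nat coev2_left coev2_right lu_inv_unit -!compA.
by rewrite cap_middle_asc.
Qed.

End MonoidalCalculus.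

Section Representability.
Context {C : MonCat} {R : RStructure C}.

Lemma rphi_coev (X : ob C) : rphi R X (dual R X) (coev R X) = idm (dual R X).
Proof. exact: rphi_rpsi. Qed.

Lemma rpsi_coev (X Y : ob C) (f : hom C (dual R X) Y) :
  rpsi R X Y f = comp (tensm (idm X) f) (coev R X).
Proof.
have rphi_f : rphi R X Y (comp (tensm (idm X) f) (coev R X)) = f.
  by rewrite rphi_nat rphi_coev compf1.
by rewrite -[in LHS]rphi_f rpsi_rphi.
Qed.

Lemma dual_hom_id (X : ob C) : dual_hom R (idm X) = idm (dual R X).
Proof. by rewrite /dual_hom tensm11 comp1f rphi_coev. Qed.

Lemma dual_hom_inj : r_category R ->
  forall (X X' : ob C) (f g : hom C X X'), dual_hom R f = dual_hom R g -> f = g.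
Proof.
move=> [faithful _] X X' f g eq_fg.
have [h [h_dual _]] := faithful X X'.
by rewrite -[f]h_dual -[g]h_dual eq_fg.
Qed.

End Representability.

Theorem lemma2p6 (C : MonCat) (R : RStructure C) (HR : r_category R)
  (X : ob C) (ev : hom C (tens (dual R X) X) unit) :
  zig R X ev <-> zag R X ev.
Proof.
have slide := zig_map_zag_map (coev R X) ev.
rewrite /zig /zag -/(zig_map _ _) -/(zag_map _ _); split=> [zig_id | zag_id].
- rewrite zig_id tensm11 comp1f -rpsi_coev in slide.
  by rewrite -(rphi_rpsi C R X _ (zag_map _ _)) -slide rphi_coev.
- rewrite zag_id tensm11 comp1f in slide.
  apply: (dual_hom_inj HR).
  by rewrite dual_hom_id /dual_hom slide rphi_coev.
Qed.
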